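(* Let $K$ be a field, let $n\geq 2$ and $m\geq 2$ be integers such that $\operatorname{char}(K)$ does not divide $n$, and let $f(x_1,\dots,x_m)\in K\langle x_1,\dots,x_m\rangle$ be a nonzero multilinear polynomial. If $n\geq \frac{m+1}{2}$, then the $K$-linear span of $f(M_n(K))$ contains $sl_n(K)$.
   Context: $K\langle x_1,\dots,x_m\rangle$ is the free associative algebra on noncommuting variables $x_1,\dots,x_m$. A polynomial is multilinear if it has the form $\sum_{\sigma\in S_m}\alpha_\sigma x_{\sigma(1)}\cdots x_{\sigma(m)}$ with $\alpha_\sigma\in K$. $M_n(K)$ is the algebra of $n\times n$ matrices over $K$, $f(M_n(K))=\{f(a_1,\dots,a_m): a_i\in M_n(K)\}$ is the image of $f$ on $M_n(K)$, and $sl_n(K)$ is the set of trace zero matrices in $M_n(K)$. *)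

From HB Require Import structures.
From mathcomp Require Import all_boot all_order all_algebra all_fingroup.
Set Implicit Arguments. Unset Strict Implicit. Unset Printing Implicit Defensive.
Import GRing.Theory.
Local Open Scope ring_scope.

(* A multilinear polynomial f = \sum_{s in S_m} alpha_s x_{s(0)} ... x_{s(m-1)}
   in K<x_0,...,x_{m-1}> is represented by its coefficient family alpha.
   Distinct permutations give distinct monomials, so f <> 0 iff some alpha_s <> 0. *)
Definition multilin_eval (K : fieldType) (m n : nat) (alpha : {ffun 'S_m -> K})
  (a : 'I_m -> 'M[K]_n) : 'M[K]_n :=
  \sum_(s : 'S_m) alpha s *: \big[mulmx/1%:M]_(i < m) a (s i).

From HB Require Import structures.
From mathcomp Require Import all_boot all_order all_algebra all_fingroup zify.
Set Implicit Arguments. Unset Strict Implicit. Unset Printing Implicit Defensive.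
Import GRing.Theory.

(* The K-span of f(M_n(K)) is a subspace stable under conjugation, so it suffices to
   show that it contains every matrix unit E_xy with x <> y: conjugating E_xy by
   1 + E_yx then yields E_xx - E_yy, and these matrices span sl_n(K).  To obtain
   E_xy, substitute for the variables the matrix units E_(u j, u j.+1), j < m, along
   a staircase u_0, ..., u_m that lingers twice on each index; it uses only
   m./2 + 1 <= n distinct indices, and its units multiply to a nonzero matrix in
   one order only, so f evaluates to a nonzero multiple of E_(u 0, u m). *)

Lemma incr_bounded_id (f : nat -> nat) (k : nat) :
  (forall i, i < k -> f i < f i.+1) -> f k <= k -> forall i, i <= k -> f i = i.
Proof.
move=> f_incr fk.
have f_gap j : j <= k -> forall i, i <= j -> f i + (j - i) <= f j.
  elim: j => [|j IHj] jk i ij; first by move: ij; rewrite leqn0 => /eqP ->; rewrite addn0.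
  have [lt_ij|] := ltnP i j.+1.
    by have := IHj (ltnW jk) i lt_ij; have := f_incr j jk; lia.
  by rewrite leq_eqVlt ltnNge ij orbF => /eqP <-; rewrite subnn addn0.
by move=> i ik; have := f_gap k (leqnn k) i ik; have := f_gap i ik 0 (leq0n i); lia.
Qed.

Lemma perm_incr_eq1 (m : nat) (p : 'S_m.+1) :
  (forall i, i < m -> p (inord i) < p (inord i.+1)) -> p = 1%g.
Proof.
move=> p_incr; have p_id := incr_bounded_id p_incr (ltn_ord (p (inord m))).
apply/permP => x; apply: val_inj; rewrite perm1 /=.
by rewrite -[in LHS](inord_val x) p_id ?inordK // -ltnS.
Qed.

Lemma perm_two_points (T : finType) (i j x y : T) :
  i != j -> x != y -> exists p : {perm T}, p i = x /\ p j = y.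
Proof.
move=> ij xy; pose t := tperm i x; exists (t * tperm (t j) y)%g.
rewrite !permM tpermL; split=> //.
rewrite tpermL; apply: tpermD; last by rewrite eq_sym.
by rewrite -[x in _ != x](tpermL i x) (inj_eq perm_inj) eq_sym.
Qed.

(* The matrix units E_(u a, u a.+1), a < m, can only be chained in increasing order
   of their indices. *)
Definition staircase (n m : nat) (u : nat -> 'I_n) : Prop :=
  forall a b, a < m -> b < m -> a != b -> u a.+1 = u b -> a < b.

Lemma staircase_halves (n m : nat) (v : nat -> 'I_n) :
  {in [pred j | j <= m./2] &, injective v} -> staircase m (fun j => v (m - j)./2).
Proof.
move=> v_inj a b am bm /eqP ab /v_inj; rewrite !inE -!divn2.
by move=> /(_ (leq_div2r 2 (leq_subr _ _)) (leq_div2r 2 (leq_subr _ _))); lia.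
Qed.

Local Open Scope ring_scope.

Section MatrixUnitChains.
Variables (R : pzRingType) (n : nat).

Lemma prod_delta_mx_iota (p q : nat -> 'I_n) (j k : nat) :
  \big[mulmx/1%:M]_(i <- iota j k.+1) (delta_mx (p i) (q i) : 'M[R]_n) =
  if all (fun i => q i == p i.+1) (iota j k) then delta_mx (p j) (q (j + k)%N) else 0.
Proof.
elim: k j => [|k IHk] j; first by rewrite big_cons big_nil mulmx1 addn0.
rewrite [iota j k.+2]/= big_cons IHk /= addSnnS.
have [->|qp] := eqVneq (q j) (p j.+1); case: ifP => _; rewrite ?mulmx0 //=.
  exact: mul_delta_mx.
exact: mul_delta_mx_0.
Qed.

Variables (m : nat) (u : nat -> 'I_n).
Hypothesis u_stair : staircase m.+1 u.

Lemma prod_stair_perm (p : 'S_m.+1) :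
  \big[mulmx/1%:M]_(i < m.+1) (delta_mx (u (p i)) (u (p i).+1) : 'M[R]_n) =
  if p == 1%g then delta_mx (u 0%N) (u m.+1) else 0.
Proof.
pose t i : nat := p (inord i).
rewrite (eq_bigr (fun i : 'I_m.+1 => delta_mx (u (t i)) (u (t i).+1))); last first.
  by move=> i _; rewrite /t inord_val.
rewrite -(big_mkord xpredT (fun i => delta_mx (u (t i)) (u (t i).+1))).
rewrite /index_iota subn0 prod_delta_mx_iota add0n.
have t_id i : (i <= m)%N -> p = 1%g -> t i = i.
  by move=> im p1; rewrite /t p1 perm1 inordK.
case: ifP => [chain|no_chain].
  suff p1 : p = 1%g by rewrite p1 eqxx !t_id.
  apply: perm_incr_eq1 => i im; change (t i < t i.+1)%N.
  apply: u_stair; rewrite ?ltn_ord //.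
    apply/eqP => /val_inj /perm_inj /(congr1 (@nat_of_ord _)); rewrite !inordK //; lia.
  by apply/eqP; have /allP := chain; apply; rewrite mem_iota.
case: eqP => // p1; move/negP: no_chain; case; apply/allP => i.
by rewrite mem_iota => /andP [_ im]; rewrite !t_id //; lia.
Qed.

End MatrixUnitChains.

Lemma big_mulmx_conj (R : pzRingType) (n m : nat) (g h : 'M[R]_n) (a : 'I_m -> 'M[R]_n) :
  h *m g = 1%:M -> g *m h = 1%:M ->
  \big[mulmx/1%:M]_(i < m) (g *m a i *m h) = g *m \big[mulmx/1%:M]_(i < m) a i *m h.
Proof.
move=> hg gh; elim: m a => [|m IHm] a; first by rewrite !big_ord0 mulmx1.
by rewrite !big_ord_recl IHm !mulmxA -[g *m a ord0 *m h *m g]mulmxA hg mulmx1.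
Qed.

Section MultilinearSpan.
Variables (K : fieldType) (n m : nat) (alpha : {ffun 'S_m -> K}).

Definition multilin_span (A : 'M[K]_n) : Prop :=
  exists (r : nat) (c : 'I_r -> K) (a : 'I_r -> 'I_m -> 'M[K]_n),
    A = \sum_(k < r) c k *: multilin_eval alpha (a k).

Lemma multilin_span0 : multilin_span 0.
Proof. by exists 0%N, (fun _ => 0), (fun _ _ => 0); rewrite big_ord0. Qed.

Lemma multilin_spanD A B : multilin_span A -> multilin_span B -> multilin_span (A + B).
Proof.
move=> [r1 [c1 [a1 ->]]] [r2 [c2 [a2 ->]]].
exists (r1 + r2)%N, (fun k => match split k with inl i => c1 i | inr j => c2 j end),
  (fun k => match split k with inl i => a1 i | inr j => a2 j end).
rewrite big_split_ord /=; congr (_ + _); apply: eq_bigr => i _.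
  by rewrite -[lshift _ _]/(unsplit (inl i)) unsplitK.
by rewrite -[rshift _ _]/(unsplit (inr i)) unsplitK.
Qed.

Lemma multilin_spanZ c A : multilin_span A -> multilin_span (c *: A).
Proof.
move=> [r [d [a ->]]]; exists r, (fun k => c * d k), a.
by rewrite scaler_sumr; apply: eq_bigr => k _; rewrite scalerA.
Qed.

Lemma multilin_eval_conj (g h : 'M[K]_n) (a : 'I_m -> 'M[K]_n) :
  h *m g = 1%:M -> g *m h = 1%:M ->
  multilin_eval alpha (fun i => g *m a i *m h) = g *m multilin_eval alpha a *m h.
Proof.
move=> hg gh; rewrite /multilin_eval mulmx_sumr mulmx_suml; apply: eq_bigr => s _.
by rewrite (big_mulmx_conj _ hg gh) -scalemxAr -scalemxAl.
Qed.

Lemma multilin_span_conj (g h A : 'M[K]_n) : h *m g = 1%:M -> g *m h = 1%:M ->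
  multilin_span A -> multilin_span (g *m A *m h).
Proof.
move=> hg gh [r [c [a ->]]]; exists r, c, (fun k i => g *m a k i *m h).
rewrite mulmx_sumr mulmx_suml; apply: eq_bigr => k _.
by rewrite multilin_eval_conj // -scalemxAr -scalemxAl.
Qed.

End MultilinearSpan.

Lemma multilin_eval_stair (K : fieldType) (n m : nat) (alpha : {ffun 'S_m.+1 -> K})
    (u : nat -> 'I_n) (s0 : 'S_m.+1) :
  staircase m.+1 u ->
  multilin_eval alpha (fun i => delta_mx (u ((s0^-1)%g i)) (u ((s0^-1)%g i).+1))
  = alpha s0 *: delta_mx (u 0%N) (u m.+1).
Proof.
move=> u_stair.
have stair (s : 'S_m.+1) :
    \big[mulmx/1%:M]_(i < m.+1) delta_mx (u ((s0^-1)%g (s i))) (u ((s0^-1)%g (s i)).+1)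
    = if s == s0 then delta_mx (u 0%N) (u m.+1) else 0 :> 'M[K]_n.
  by rewrite eq_mulgV1 -(prod_stair_perm _ u_stair); apply: eq_bigr => i _; rewrite permM.
rewrite /multilin_eval (bigD1 s0) //= stair eqxx big1 ?addr0 // => s /negbTE s_s0.
by rewrite stair s_s0 scaler0.
Qed.

Lemma delta_mx_multilin_span (K : fieldType) (n m : nat) (alpha : {ffun 'S_m.+1 -> K})
    (s0 : 'S_m.+1) :
  alpha s0 != 0 -> (0 < m)%N -> (m.+1./2 < n)%N ->
  forall x y : 'I_n, x != y -> multilin_span alpha (delta_mx x y).
Proof.
move=> alpha_s0 m_gt0; set k := m.+1./2.
have k_gt0 : (0 < k)%N by rewrite /k -divn2; lia.
case: n => [|n] // kn x y xy.
have k0 : (inord k : 'I_n.+1) != inord 0.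
  by apply/eqP => /(congr1 (@nat_of_ord _)); rewrite !inordK //; lia.
have [p [pk p0]] := perm_two_points k0 xy.
pose v j : 'I_n.+1 := p (inord j).
have v_inj : {in [pred j | (j <= k)%N] &, injective v}.
  move=> a b; rewrite !inE => ak bk /perm_inj /(congr1 (@nat_of_ord _)).
  by rewrite !inordK //; lia.
pose u j := v (m.+1 - j)./2.
exists 1%N, (fun _ => (alpha s0)^-1),
  (fun _ i => delta_mx (u ((s0^-1)%g i)) (u ((s0^-1)%g i).+1)).
rewrite big_ord1 (multilin_eval_stair _ _ (staircase_halves v_inj)).
by rewrite scalerA mulVf // scale1r /u subn0 subnn /v pk p0.
Qed.

Section TraceZero.
Variables (R : pzRingType) (n : nat) (P : 'M[R]_n.+1 -> Prop).
Hypotheses (P0 : P 0) (PD : forall A B, P A -> P B -> P (A + B))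
  (PZ : forall c A, P A -> P (c *: A))
  (Pconj : forall g h A, h *m g = 1%:M -> g *m h = 1%:M -> P A -> P (g *m A *m h))
  (P_delta : forall x y, x != y -> P (delta_mx x y)).

Lemma closedB A B : P A -> P B -> P (A - B).
Proof. by move=> PA PB; apply: PD => //; rewrite -scaleN1r; apply: PZ. Qed.

Lemma closed_sum (I : finType) (Q : pred I) (F : I -> 'M[R]_n.+1) :
  (forall i, Q i -> P (F i)) -> P (\sum_(i | Q i) F i).
Proof. exact: big_ind. Qed.

Lemma delta_mx_diff (x y : 'I_n.+1) : x != y -> P (delta_mx x x - delta_mx y y).
Proof.
move=> xy; pose E : 'M[R]_n.+1 := delta_mx y x.
have EE : E *m E = 0 by rewrite mul_delta_mx_0 // eq_sym.
have conj : (1%:M + E) *m delta_mx x y *m (1%:M - E) =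
    delta_mx x y + delta_mx y y - delta_mx x x - delta_mx y x.
  rewrite mulmxDl mul1mx mul_delta_mx mulmxBr mulmx1 mulmxDl !mul_delta_mx.
  by rewrite opprD addrA.
have -> : delta_mx x x - delta_mx y y =
    delta_mx x y - delta_mx y x - (1%:M + E) *m delta_mx x y *m (1%:M - E).
  by rewrite conj opprB addrA subrK opprB opprD addrCA addNKr.
apply: closedB; first by apply: closedB; apply: P_delta; rewrite // eq_sym.
have hg : (1%:M - E) *m (1%:M + E) = 1%:M.
  by rewrite mulmxBl !mulmxDr !mul1mx mulmx1 EE addr0 addrK.
have gh : (1%:M + E) *m (1%:M - E) = 1%:M.
  by rewrite mulmxDl !mulmxBr !mul1mx mulmx1 EE subr0 subrK.
exact: Pconj hg gh (P_delta xy).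
Qed.

Lemma trace0_closed (A : 'M[R]_n.+1) : \tr A = 0 -> P A.
Proof.
move=> trA; have -> : A = \sum_i (\sum_j A i j *: delta_mx i j - A i i *: delta_mx 0 0).
  by rewrite sumrB -scaler_suml [\sum_i A i i]trA scale0r subr0 -matrix_sum_delta.
apply: closed_sum => i _; rewrite (bigD1 i) //= addrAC -scalerBr.
apply: PD; last by apply: closed_sum => j ij; apply/PZ/P_delta; rewrite eq_sym.
apply: PZ; have [->|i0] := eqVneq i 0; first by rewrite subrr.
exact: delta_mx_diff.
Qed.

End TraceZero.

Unset Implicit Arguments.
Set Strict Implicit.

Theorem theorem3p1 (K : fieldType) (n m : nat) (alpha : {ffun 'S_m -> K}) :
  (2 <= n)%N -> (2 <= m)%N ->
  (forall p : nat, p \in [pchar K] -> ~~ (p %| n)%N) ->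
  (exists s : 'S_m, alpha s != 0) ->
  (m.+1 <= 2 * n)%N ->
  forall A : 'M[K]_n, \tr A = 0 ->
    exists (r : nat) (c : 'I_r -> K) (a : 'I_r -> 'I_m -> 'M[K]_n),
      A = \sum_(k < r) c k *: multilin_eval alpha (a k).
Proof.
move=> _ m_ge2 _ [s0 alpha_s0] mn A trA.
case: m alpha s0 alpha_s0 m_ge2 mn => [|m] // alpha s0 alpha_s0 m_ge2 mn.
case: n A trA mn => [|n] // A trA mn.
apply: (trace0_closed (P := multilin_span alpha)) trA.
- exact: multilin_span0.
- exact: multilin_spanD.
- exact: multilin_spanZ.
- exact: multilin_span_conj.
- by apply: (delta_mx_multilin_span alpha_s0); rewrite -?divn2; lia.
Qed.
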